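(* Let $t\ge1$, $t\le k\le v$, $\lambda\ge1$ be integers and suppose there exists a $t$-$(v,k,\lambda)$ design whose number of blocks $b=\lambda\binom{v}{t}/\binom{k}{t}$ is divisible by $v$. Then there exists an authentication system with $k$ source states, $v$ messages and $b$ encoding rules which, when the source states are equiprobable and the encoding rules are used with equal probability, has perfect secrecy and is $(t-1)$-fold secure against spoofing in the verification oracle model. Moreover, the system is optimal (i.e. $b=\binom{v}{t}/\binom{k}{t}$) if and only if $\lambda=1$.
   Context: A $t$-$(v,k,\lambda)$ design is a pair $(X,\mathcal{B})$ where $X$ is a set of $v$ points and $\mathcal{B}$ is a collection of distinct $k$-subsets of $X$ (blocks) such that every $t$-subset of $X$ is contained in exactly $\lambda$ blocks; $b=|\mathcal{B}|$. Authentication system: finite sets $\mathcal{S}$ of $k$ source states, $\mathcal{M}$ of $v$ messages, $\mathcal{E}$ of $b$ encoding rules, each $e\in\mathcal{E}$ an injective map $\mathcal{S}\to\mathcal{M}$; $M(e)=\{e(s):s\in\mathcal{S}\}$ is the set of messages valid (accepted) under $e$. A key $e$ is drawn according to $p_E$, source states according to $p_S$, independently; ''equiprobable source states'' means independent and uniformly distributed source states. Perfect secrecy: $p_S(s\mid m)=p_S(s)$ for every source state $s$ and message $m$. Verification oracle (V-oracle) model: for a secret key $e$, the opponent may adaptively submit query messages $m$ to an oracle which answers ''accept'' if $m\in M(e)$ and ''reject'' otherwise. In an offline spoofing attack of order $i$, the opponent makes $i$ adaptive queries and then outputs a message distinct from all queried ones, succeeding if it lies in $M(e)$; $P^{\mathrm{offline}}_{d_i}$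 denotes the maximal success probability over strategies. In an online attack of order $i$, the opponent succeeds as soon as one of his $i+1$ distinct submitted messages is accepted; $P^{\mathrm{online}}_{d_i}$ is the maximal success probability. One always has $P^{\mathrm{offline}}_{d_i}\ge k/v$ and $P^{\mathrm{online}}_{d_i}\ge 1-\binom{v-k}{i+1}/\binom{v}{i+1}$, and equality in one is equivalent to equality in the other. The system is $t$-fold secure against spoofing in the V-oracle model if $P^{\mathrm{offline}}_{d_t}=k/v$ (equivalently $P^{\mathrm{online}}_{d_t}=1-\binom{v-k}{t+1}/\binom{v}{t+1}$). A $(t-1)$-fold secure system in this model has $b\ge\binom{v}{t}/\binom{k}{t}$; it is optimal if equality holds. *)

From HB Require Import structures.
From mathcomp Require Import all_boot all_order all_algebra.
Set Implicit Arguments. Unset Strict Implicit. Unset Printing Implicit Defensive.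
Import Order.TTheory GRing.Theory Num.Theory.

(* Blocks form a set of k-subsets (hence distinct); every t-subset lies in
   exactly lam blocks. *)
Definition is_design (v t k lam : nat) (D : {set {set 'I_v}}) : Prop :=
  (forall B, B \in D -> #|B| = k) /\
  (forall T : {set 'I_v}, #|T| = t -> #|[set B in D | T \subset B]| = lam).

(* Source states 'I_k, messages 'I_v, encoding rules 'I_b;
   enc e : 'I_k -> 'I_v is the encoding rule e. *)
Definition auth_system (k v b : nat) (enc : 'I_b -> 'I_k -> 'I_v) : Prop :=
  (forall e, injective (enc e)) /\
  (forall e1 e2, enc e1 =1 enc e2 -> e1 = e2).

Definition valid_msgs (k v b : nat) (enc : 'I_b -> 'I_k -> 'I_v) (e : 'I_b)
  : {set 'I_v} := [set enc e s | s : 'I_k].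

Local Open Scope ring_scope.

Definition unif (n : nat) : 'I_n -> rat := fun _ => (n%:R)^-1.

Definition pSM (k v b : nat) (enc : 'I_b -> 'I_k -> 'I_v)
  (pE : 'I_b -> rat) (pS : 'I_k -> rat) (s : 'I_k) (m : 'I_v) : rat :=
  \sum_(e | enc e s == m) pE e * pS s.

Definition pM (k v b : nat) (enc : 'I_b -> 'I_k -> 'I_v)
  (pE : 'I_b -> rat) (pS : 'I_k -> rat) (m : 'I_v) : rat :=
  \sum_(s : 'I_k) pSM enc pE pS s m.

(* perfect secrecy: p_S(s | m) = p_S(s) for every s and every message m
   (of positive probability, so that the conditional is defined) *)
Definition perfect_secrecy (k v b : nat) (enc : 'I_b -> 'I_k -> 'I_v)
  (pE : 'I_b -> rat) (pS : 'I_k -> rat) : Prop :=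
  forall (s : 'I_k) (m : 'I_v), 0 < pM enc pE pS m ->
    pSM enc pE pS s m / pM enc pE pS m = pS s.

(* A deterministic adaptive strategy maps the history of oracle answers so
   far (true = accept) to the next message to submit; after i answers it
   gives the final output message. *)
Definition strategy (v : nat) := seq bool -> 'I_v.

Fixpoint hist (k v b : nat) (enc : 'I_b -> 'I_k -> 'I_v) (st : strategy v)
  (e : 'I_b) (j : nat) : seq bool :=
  match j with
  | 0 => [::]
  | j'.+1 => let h := hist enc st e j' in rcons h (st h \in valid_msgs enc e)
  end.

Definition queries (k v b : nat) (enc : 'I_b -> 'I_k -> 'I_v) (st : strategy v)
  (i : nat) (e : 'I_b) : seq 'I_v :=
  [seq st (hist enc st e j) | j <- iota 0 i].

Definition output (k v b : nat) (enc : 'I_b -> 'I_k -> 'I_v) (st : strategy v)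
  (i : nat) (e : 'I_b) : 'I_v := st (hist enc st e i).

Definition valid_offline (k v b : nat) (enc : 'I_b -> 'I_k -> 'I_v)
  (st : strategy v) (i : nat) : Prop :=
  forall e, output enc st i e \notin queries enc st i e.

Definition succ_offline (k v b : nat) (enc : 'I_b -> 'I_k -> 'I_v)
  (pE : 'I_b -> rat) (st : strategy v) (i : nat) : rat :=
  \sum_(e | output enc st i e \in valid_msgs enc e) pE e.

Definition Poffline_eq (k v b : nat) (enc : 'I_b -> 'I_k -> 'I_v)
  (pE : 'I_b -> rat) (i : nat) (p : rat) : Prop :=
  (exists2 st, valid_offline enc st i & succ_offline enc pE st i = p) /\
  (forall st, valid_offline enc st i -> succ_offline enc pE st i <= p).

Definition fold_secure (k v b : nat) (enc : 'I_b -> 'I_k -> 'I_v)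
  (pE : 'I_b -> rat) (t : nat) : Prop :=
  Poffline_eq enc pE t (k%:R / v%:R).

Definition optimal (k v b : nat) (enc : 'I_b -> 'I_k -> 'I_v) (t : nat) : Prop :=
  (b%:R : rat) = 'C(v, t)%:R / 'C(k, t)%:R.

From HB Require Import structures.
From mathcomp Require Import all_boot all_order all_algebra.
From mathcomp Require Import perm zify ring.
Set Implicit Arguments. Unset Strict Implicit. Unset Printing Implicit Defensive.
Import Order.TTheory GRing.Theory Num.Theory.

(* The encoding rules of the code are the b blocks of a t-(v,k,lam) design D
   with v | b, each block being ordered, i.e. turned into an injective map
   from the k source states onto the block.  The development has four parts.
   1. Counting in designs: for disjoint A and R with |A| + |R| <= t, the
      number of blocks containing A and avoiding R depends only on |A| and
      |R|, so a point outside A and R lies in a fraction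
      (k - |A|) / (v - |A| - |R|) of them.  This also gives the block count
      b C(k,t) = lam C(v,t) and the replication number k b / v.
   2. Balanced orderings: as every point lies in (b / v) k blocks, the blocks
      can be ordered so that every message occurs exactly b / v times at
      every source state (descent on a quadratic potential, exchanging
      entries along paths).  This is perfect secrecy.
   3. Spoofing: by induction on the number of queries left, splitting on the
      answer to the first query, every offline attack of order t - 1 is
      accepted by exactly a fraction k / v of the blocks.
   4. The code is optimal iff lam = 1, by the block count. *)

Lemma sum_const_on (T : finType) (X : {set T}) (F : T -> nat) c :
  {in X, forall x, F x = c} -> \sum_(x in X) F x = #|X| * c.
Proof. by move=> FX; rewrite (eq_bigr (fun=> c)) // sum_nat_const. Qed.

Lemma card_set_sum (T : finType) (P : pred T) : #|[set x | P x]| = \sum_x (P x : nat).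
Proof. by rewrite -sum1dep_card big_mkcond; apply: eq_bigr => x _; case: (P x). Qed.

Lemma ltn_sum_pt (T : finType) (P : pred T) (f g : T -> nat) i0 : P i0 ->
  (forall i, P i -> f i <= g i) -> f i0 < g i0 ->
  \sum_(i | P i) f i < \sum_(i | P i) g i.
Proof.
move=> Pi0 fg fg0; rewrite (bigD1 i0) // [X in _ < X](bigD1 i0) //= -addSn.
by apply: leq_add => //; apply: leq_sum => i /andP [Pi _]; apply: fg.
Qed.

Section DesignCounting.
Variables (v t k lam : nat) (D : {set {set 'I_v}}).
Hypotheses (design : is_design t k lam D) (tk : t <= k) (kv : k <= v).

Definition blocks_through (A R : {set 'I_v}) : {set {set 'I_v}} :=
  [set B in D | (A \subset B) && (R \subset ~: B)].

Lemma block_size B : B \in D -> #|B| = k.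
Proof. by case: design => size_k _; apply: size_k. Qed.

Lemma blocks_throughU1l x A R B :
  (B \in blocks_through (x |: A) R) = (B \in blocks_through A R) && (x \in B).
Proof. by rewrite !inE subUset sub1set; case: (x \in B); rewrite ?andbT ?andbF. Qed.

Lemma blocks_throughU1r x A R B :
  (B \in blocks_through A (x |: R)) = (B \in blocks_through A R) && (x \notin B).
Proof. by rewrite !inE subUset sub1set !inE; case: (x \in B); rewrite ?andbT ?andbF. Qed.

Lemma blocks_through0 : blocks_through set0 set0 = D.
Proof. by apply/setP => B; rewrite !inE !sub0set !andbT. Qed.

Lemma card_blocks_through_split x A R :
  #|blocks_through A R| =
  #|blocks_through (x |: A) R| + #|blocks_through A (x |: R)|.
Proof.
rewrite -(cardsID [set B : {set 'I_v} | x \in B]); congr (_ + _); apply: eq_card => B.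
  by rewrite blocks_throughU1l in_setI inE.
by rewrite blocks_throughU1r in_setD inE andbC.
Qed.

(* Double counting of the pairs (x, B) with x in B outside A and R:
   every block through A avoiding R has k - |A| such points. *)
Lemma sum_blocks_through_point A R :
  \sum_(x in ~: (A :|: R)) #|blocks_through (x |: A) R| =
  (k - #|A|) * #|blocks_through A R|.
Proof.
have card_inc x : #|blocks_through (x |: A) R| =
    \sum_(B in blocks_through A R) (x \in B : nat).
  rewrite -sum1_card big_mkcond [RHS]big_mkcond; apply: eq_bigr => B _.
  by rewrite blocks_throughU1l; case: (B \in _); case: (x \in B).
under eq_bigr do rewrite card_inc.
rewrite exchange_big /= mulnC -sum_nat_const; apply: eq_bigr => B.
rewrite inE => /andP [BD /andP [AB RB]].
rewrite -big_mkcondr /= sum1_card -(block_size BD) -(setIidPr AB) -cardsD.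
apply: eq_card => x; rewrite unfold_in /= !inE negb_or.
case xB: (x \in B); rewrite ?andbF ?andbT //.
have xR : x \notin R by apply/negP => /(subsetP RB); rewrite inE xB.
by rewrite xR andbT.
Qed.

(* The number of blocks through A is determined by |A| when |A| <= t:
   by induction on t - |A|, using the double counting above. *)
Lemma card_blocks_containing d (A A' : {set 'I_v}) :
  #|A| = #|A'| -> #|A| + d = t ->
  #|blocks_through A set0| = #|blocks_through A' set0|.
Proof.
case: design => _ lam_count.
elim: d A A' => [|d IH] A A' AA' Ad.
  have through_only X : blocks_through X set0 = [set B in D | X \subset B].
    by apply/setP => B; rewrite !inE sub0set andbT.
  by rewrite !through_only !lam_count //; lia.
have [y yA] : exists y, y \notin A.
  have : 0 < #|~: A| by have := cardsC A; rewrite card_ord; lia.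
  by case/card_gt0P => y; rewrite inE; exists y.
suff count (X : {set 'I_v}) : #|X| = #|A| ->
    (k - #|A|) * #|blocks_through X set0| =
    (v - #|A|) * #|blocks_through (y |: A) set0|.
  by apply/eqP; rewrite -(@eqn_pmul2l (k - #|A|)) ?count //; lia.
move=> XA; rewrite -XA -sum_blocks_through_point setU0.
rewrite (@sum_const_on _ _ _ #|blocks_through (y |: A) set0|).
  by rewrite cardsCs setCK card_ord.
move=> x; rewrite inE => xX; apply: IH; rewrite ?cardsU1 ?xX ?yA ?XA //; lia.
Qed.

(* More generally, for disjoint A and R with |A| + |R| <= t, the number of
   blocks through A avoiding R is determined by |A| and |R|: peel off the
   points of R one at a time with the splitting identity. *)
Lemma card_blocks_through r (A A' R R' : {set 'I_v}) :
  A \subset ~: R -> A' \subset ~: R' -> #|A| = #|A'| ->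
  #|R| = r -> #|R'| = r -> #|A| + r <= t ->
  #|blocks_through A R| = #|blocks_through A' R'|.
Proof.
elim: r A A' R R' => [|r IH] A A' R R' AR AR' AA' Rr R'r Art.
  move/eqP: Rr R'r; rewrite cards_eq0 => /eqP -> /eqP; rewrite cards_eq0 => /eqP ->.
  by apply: (@card_blocks_containing (t - #|A|)); lia.
have peel (X Y : {set 'I_v}) : X \subset ~: Y -> #|Y| = r.+1 -> exists y,
    [/\ #|blocks_through X (Y :\ y)| =
        #|blocks_through (y |: X) (Y :\ y)| + #|blocks_through X Y|,
        y \notin X, #|Y :\ y| = r, X \subset ~: (Y :\ y)
      & y |: X \subset ~: (Y :\ y)].
  move=> XY Yr; have [y yY] : exists y, y \in Y by apply/card_gt0P; rewrite Yr.
  have XYy : X \subset ~: (Y :\ y).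
    by apply: subset_trans XY _; rewrite setCS subD1set.
  exists y; split=> //.
  - by rewrite (card_blocks_through_split y X (Y :\ y)) setD1K.
  - by apply/negP => /(subsetP XY); rewrite inE yY.
  - by have := cardsD1 y Y; rewrite yY Yr; lia.
  - by rewrite subUset sub1set !inE eqxx XYy.
have [y [Ey yA Ry AR1 AR2]] := peel A R AR Rr.
have [y' [Ey' yA' R'y' AR1' AR2']] := peel A' R' AR' R'r.
apply/eqP; rewrite -(eqn_add2l #|blocks_through (y |: A) (R :\ y)|) -Ey.
rewrite (IH A A' (R :\ y) (R' :\ y')) //; last by lia.
rewrite (IH (y |: A) (y' |: A') (R :\ y) (R' :\ y')) ?Ey' //;
  by rewrite ?cardsU1 ?yA ?yA' ?AA' //; lia.
Qed.

(* The key ratio: a new point x outside A and R lies in a fraction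
   (k - |A|) / (v - |A| - |R|) of the blocks through A avoiding R, because
   all the points outside A and R play the same role. *)
Lemma card_blocks_through_ratio (A R : {set 'I_v}) x :
  A \subset ~: R -> #|A| + #|R| < t -> x \notin A :|: R ->
  (v - (#|A| + #|R|)) * #|blocks_through (x |: A) R| =
  (k - #|A|) * #|blocks_through A R|.
Proof.
move=> AR ARt xAR; rewrite -sum_blocks_through_point.
rewrite (@sum_const_on _ _ _ #|blocks_through (x |: A) R|).
  have AR0 : A :&: R = set0 by apply/disjoint_setI0; rewrite disjoints_subset.
  have := cardsC (A :|: R); rewrite card_ord cardsU AR0 cards0 => cardC.
  by congr (_ * _); lia.
move=> y; rewrite inE !in_setU negb_or => /andP [yA yR].
move: xAR; rewrite !in_setU negb_or => /andP [xA xR].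
apply: (@card_blocks_through #|R|) => //.
- by rewrite subUset sub1set inE yR AR.
- by rewrite subUset sub1set inE xR AR.
- by rewrite !cardsU1 yA xA.
- by rewrite cardsU1 yA; lia.
Qed.

(* Fisher-type count of the blocks: b * C(k, t) = lam * C(v, t), by double
   counting the pairs (T, B) with T a t-subset of the block B. *)
Lemma card_design : #|D| * 'C(k, t) = lam * 'C(v, t).
Proof.
case: design => size_k lam_count.
have pairs_by_T : \sum_(T in [set T : {set 'I_v} | #|T| == t])
    #|[set B in D | T \subset B]| = 'C(v, t) * lam.
  rewrite (@sum_const_on _ _ _ lam); first by rewrite card_draws card_ord.
  by move=> T; rewrite inE => /eqP; apply: lam_count.
rewrite [RHS]mulnC -pairs_by_T.
under eq_bigr => T _ do rewrite (card_set_sum (fun B => (B \in D) && (T \subset B))).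
rewrite exchange_big /= [RHS](bigID (mem D)) /= [X in _ = _ + X]big1; last first.
  by move=> B /negPf BD; apply: big1 => T _; rewrite BD.
rewrite addn0 [RHS](@sum_const_on _ D _ 'C(k, t)) // => B BD.
rewrite -(size_k B BD) -cards_draws card_set_sum big_mkcond /=.
by apply: eq_bigr => T _; rewrite !inE BD /= andbC; case: (_ == _).
Qed.

Lemma design_replication (m : 'I_v) : 0 < t ->
  v * #|blocks_through [set m] set0| = k * #|D|.
Proof.
move=> t_gt0; have := @card_blocks_through_ratio set0 set0 m (sub0set _).
by rewrite !cards0 !setU0 addn0 !subn0 blocks_through0 inE => ->.
Qed.

End DesignCounting.

(* Moving one unit of mass of a nat-valued function from x to y changes its
   sum of squares by 2 (f y - f x) + 2. *)
Lemma sum_sq_transfer (T : finType) (f g : T -> nat) x y : x != y ->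
  (forall z, g z + (x == z) = f z + (y == z)) ->
  \sum_z (g z)^2 + 2 * f x = \sum_z (f z)^2 + 2 * f y + 2.
Proof.
move=> xy fg.
have gx := fg x; have gy := fg y.
rewrite eqxx eq_sym (negPf xy) in gx; rewrite eqxx (negPf xy) in gy.
rewrite (bigD1 x) // [X in _ = X + _ + _](bigD1 x) //=.
rewrite (bigD1 y) /=; last by rewrite eq_sym.
rewrite [X in _ = _ + X + _ + _](bigD1 y) /=; last by rewrite eq_sym.
rewrite (eq_bigr (fun z => (f z)^2)); last first.
  move=> z /andP [zx zy]; have := fg z.
  by rewrite eq_sym (negPf zx) eq_sym (negPf zy) !addn0 => ->.
nia.
Qed.

Lemma sum_eq_indicator (T : finType) (X : {set T}) a :
  \sum_(y in X) (a == y : nat) = (a \in X).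
Proof.
case: (boolP (a \in X)) => aX; last first.
  by apply: big1 => y yX; case: eqP => // ay; rewrite ay yX in aX.
rewrite (bigD1 a) //= eqxx big1 // => y /andP [_ ya].
by rewrite eq_sym (negPf ya).
Qed.

Section BalancedOrdering.
Variables (b k v c : nat) (blk : 'I_b -> {set 'I_v}).
Hypotheses (blk_size : forall e, #|blk e| = k)
  (replication : forall m, \sum_e (m \in blk e : nat) = c * k).

Definition ordering (enc : 'I_b -> 'I_k -> 'I_v) : Prop :=
  forall e, injective (enc e) /\ (forall s, enc e s \in blk e).

Definition occurrences (enc : 'I_b -> 'I_k -> 'I_v) (s : 'I_k) (m : 'I_v) : nat :=
  \sum_e (enc e s == m : nat).

Lemma ordering_image enc e : ordering enc -> [set enc e s | s : 'I_k] = blk e.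
Proof.
move=> /(_ e) [inj sub]; apply/eqP.
rewrite eqEcard card_imset // card_ord blk_size leqnn andbT.
by apply/subsetP => z /imsetP [u _ ->].
Qed.

Lemma sum_occurrences enc m : ordering enc -> \sum_s occurrences enc s m = c * k.
Proof.
move=> ord; rewrite -(replication m) /occurrences exchange_big.
apply: eq_bigr => e _; rewrite -(ordering_image e ord).
case: (boolP (m \in _)) => [/imsetP [s0 _ ->] | mS].
  rewrite (bigD1 s0) //= eqxx big1 // => s /negPf ss0.
  by case: eqP => // /(proj1 (ord e)) E; rewrite E eqxx in ss0.
by apply: big1 => s _; case: eqP => // E; rewrite -E imset_f in mS.
Qed.

Lemma above_and_below (f : 'I_k -> nat) u0 : \sum_u f u = c * k -> f u0 != c ->
  (exists u, c < f u) /\ (exists u, f u < c).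
Proof.
move=> sum_f fu0.
have sum_c : \sum_(u : 'I_k) c = c * k by rewrite sum_nat_const card_ord mulnC.
split.
  case: (boolP [exists u, c < f u]) => [/existsP // | /existsPn not_above].
  have : \sum_u f u < \sum_(u : 'I_k) c.
    apply: (@ltn_sum_pt _ xpredT _ _ u0) => // [i _|]; first by rewrite leqNgt not_above.
    by rewrite ltn_neqAle fu0 leqNgt not_above.
  by rewrite sum_f sum_c ltnn.
case: (boolP [exists u, f u < c]) => [/existsP // | /existsPn not_below].
have : \sum_(u : 'I_k) c < \sum_u f u.
  apply: (@ltn_sum_pt _ xpredT _ _ u0) => // [i _|]; first by rewrite leqNgt not_below.
  by rewrite ltn_neqAle eq_sym fu0 leqNgt not_below.
by rewrite sum_f sum_c ltnn.
Qed.

Definition exchange_edge (enc : 'I_b -> 'I_k -> 'I_v) (s s' : 'I_k) : rel 'I_v :=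
  fun y z => [exists e, (enc e s == y) && (enc e s' == z)].

(* If x occurs more often at position s than at s', following exchange
   edges from x reaches a point y occurring more often at s' than at s:
   otherwise the set of points reachable from x would receive more
   s-occurrences than s'-occurrences, while every block with its s-entry
   in that set also has its s'-entry there. *)
Lemma reach_deficit enc s s' x : occurrences enc s' x < occurrences enc s x ->
  exists y, connect (exchange_edge enc s s') x y /\
            occurrences enc s y < occurrences enc s' y.
Proof.
move=> s'x_lt_sx.
set X := [set y | connect (exchange_edge enc s s') x y].
case: (boolP [exists y, (y \in X) && (occurrences enc s y < occurrences enc s' y)]).
  by case/existsP => y /andP []; rewrite inE => ? ?; exists y.
move/existsPn => no_deficit; exfalso.
have sum_in u : \sum_(y in X) occurrences enc u y = \sum_e (enc e u \in X : nat).
  by rewrite /occurrences exchange_big; apply: eq_bigr => e _; apply: sum_eq_indicator.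
have lt_X : \sum_(y in X) occurrences enc s' y < \sum_(y in X) occurrences enc s y.
  apply: (@ltn_sum_pt _ _ _ _ x) => //; first by rewrite inE connect0.
  by move=> y yX; have := no_deficit y; rewrite yX /= -leqNgt.
have le_X : \sum_(y in X) occurrences enc s y <= \sum_(y in X) occurrences enc s' y.
  rewrite !sum_in; apply: leq_sum => e _.
  case: (boolP (enc e s \in X)) => //; rewrite !inE => reach_es.
  suff -> : connect (exchange_edge enc s s') x (enc e s') by [].
  apply: (connect_trans reach_es); apply: connect1; apply/existsP; exists e.
  by rewrite !eqxx.
by have := leq_trans lt_X le_X; rewrite ltnn.
Qed.

Definition swap_rule (enc : 'I_b -> 'I_k -> 'I_v) (s s' : 'I_k) (e0 : 'I_b) :
  'I_b -> 'I_k -> 'I_v :=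
  fun e u => if e == e0 then enc e (tperm s s' u) else enc e u.

Lemma swap_rule_ordering enc s s' e0 : ordering enc -> ordering (swap_rule enc s s' e0).
Proof.
move=> ord e; case: (ord e) => inj sub; rewrite /swap_rule.
by case: (e == e0); split=> // u1 u2 /inj; apply: perm_inj.
Qed.

Lemma occurrences_swap_rule enc s s' e0 u m :
  occurrences (swap_rule enc s s' e0) u m + (enc e0 u == m) =
  occurrences enc u m + (enc e0 (tperm s s' u) == m).
Proof.
rewrite /occurrences (bigD1 e0) // [X in _ = X + _](bigD1 e0) //= /swap_rule eqxx.
rewrite (eq_bigr (fun e => (enc e u == m : nat))); last by move=> e /negPf ->.
lia.
Qed.

(* Swapping along a simple path x -> ... -> y of the exchange graph moves one
   s-occurrence from x to y and one s'-occurrence from y to x, leaving the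
   other positions untouched. *)
Lemma swap_along_path s s' p : forall x enc, ordering enc ->
  uniq (x :: p) -> path (exchange_edge enc s s') x p ->
  exists enc', [/\ ordering enc',
    (forall m, occurrences enc' s m + (x == m) = occurrences enc s m + (last x p == m)),
    (forall m, occurrences enc' s' m + (last x p == m) = occurrences enc s' m + (x == m))
  & (forall u m, u != s -> u != s' -> occurrences enc' u m = occurrences enc u m)].
Proof.
elim: p => [|x1 p IH] x enc ord uniq_p path_p; first by exists enc; split.
move: path_p => /= /andP [/existsP [e0 /andP [/eqP e0s /eqP e0s']] path_p].
set enc1 := swap_rule enc s s' e0.
have path1 : path (exchange_edge enc1 s s') x1 p.
  apply: (@sub_in_path _ (predC1 x) (exchange_edge enc s s')); last first.
  - exact: path_p.
  - apply/allP => z zp; apply/eqP => zx; subst z.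
    by move: uniq_p; rewrite /= zp.
  move=> y z yx _ /existsP [e /andP [/eqP ey /eqP ez]].
  apply/existsP; exists e.
  have ee0 : e != e0 by apply/eqP => E; subst e; move: yx; rewrite -ey e0s inE eqxx.
  by rewrite /enc1 /swap_rule (negPf ee0) ey ez !eqxx.
have uniq1 : uniq (x1 :: p) by case/andP: uniq_p.
have [enc' [ord' occ_s occ_s' occ_other]] :=
  IH x1 enc1 (swap_rule_ordering s s' e0 ord) uniq1 path1.
exists enc'; split => //.
- move=> m; have := occ_s m; have := occurrences_swap_rule enc s s' e0 s m.
  by rewrite tpermL e0s e0s' /= -/enc1; lia.
- move=> m; have := occ_s' m; have := occurrences_swap_rule enc s s' e0 s' m.
  by rewrite tpermR e0s e0s' /= -/enc1; lia.
- move=> u m us us'; rewrite occ_other //; have := occurrences_swap_rule enc s s' e0 u m.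
  by rewrite tpermD 1?eq_sym // -/enc1; lia.
Qed.

Definition row_potential (enc : 'I_b -> 'I_k -> 'I_v) (s : 'I_k) : nat :=
  \sum_m (occurrences enc s m)^2.

Definition potential (enc : 'I_b -> 'I_k -> 'I_v) : nat := \sum_s row_potential enc s.

Lemma potential_two_rows enc enc' s s' : s != s' ->
  (forall u m, u != s -> u != s' -> occurrences enc' u m = occurrences enc u m) ->
  potential enc' + row_potential enc s + row_potential enc s' =
  potential enc + row_potential enc' s + row_potential enc' s'.
Proof.
move=> ss' same; rewrite /potential (bigD1 s) // [in RHS](bigD1 s) //=.
rewrite (bigD1 s') /=; last by rewrite eq_sym.
rewrite [in RHS](bigD1 s') /=; last by rewrite eq_sym.
rewrite (eq_bigr (row_potential enc)); first lia.
by move=> u /andP [us us']; apply: eq_bigr => m _; rewrite same.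
Qed.

(* An unbalanced ordering can be improved: take a point x occurring too
   often at s and too rarely at s', and swap along a path from x to a point
   y with the opposite imbalance; the potential strictly decreases. *)
Lemma improve_ordering enc u0 x : ordering enc -> occurrences enc u0 x != c ->
  exists enc', ordering enc' /\ potential enc' < potential enc.
Proof.
move=> ord unbalanced.
have [[s sx_gt] [s' s'x_lt]] := above_and_below (sum_occurrences x ord) unbalanced.
have ss' : s != s' by apply/eqP => E; subst; lia.
have [y [/connectP [p0 path0 y_last] y_deficit]] :=
  reach_deficit (ltn_trans s'x_lt sx_gt).
have xy : x != y by apply/eqP => E; rewrite -E in y_deficit; lia.
subst y; move: y_deficit xy.
case: (shortenP path0) => p path_p uniq_p _; set y := last x p => y_deficit xy.
have [enc' [ord' occ_s occ_s' occ_other]] := swap_along_path ord uniq_p path_p.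
exists enc'; split => //.
have row_s := sum_sq_transfer xy occ_s.
have row_s' : \sum_z occurrences enc' s' z ^ 2 + 2 * occurrences enc s' y =
    \sum_z occurrences enc s' z ^ 2 + 2 * occurrences enc s' x + 2.
  by apply: sum_sq_transfer; rewrite // eq_sym.
have := potential_two_rows ss' occ_other; rewrite /row_potential; lia.
Qed.

(* Descent on the potential, starting from arbitrary orderings of the blocks,
   yields a balanced ordering. *)
Lemma balanced_ordering :
  exists enc, ordering enc /\ forall s m, occurrences enc s m = c.
Proof.
suff descent n enc : potential enc < n -> ordering enc ->
    exists enc', ordering enc' /\ forall s m, occurrences enc' s m = c.
  pose enc0 e s := enum_val (cast_ord (esym (blk_size e)) s).
  apply: (descent (potential enc0).+1) => // e; split.
    by move=> s1 s2 /enum_val_inj /cast_ord_inj.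
  by move=> s; apply: enum_valP.
elim: n enc => // n IH enc pot_lt ord.
case: (boolP [exists s, exists m, occurrences enc s m != c]).
  case/existsP => s /existsP [m unbalanced].
  have [enc' [ord' pot_dec]] := improve_ordering ord unbalanced.
  by apply: (IH enc') => //; apply: leq_trans pot_dec _.
move/existsPn => balanced; exists enc; split => // s m; apply/eqP.
by have /existsPn /(_ m) := balanced s; rewrite negbK.
Qed.

End BalancedOrdering.

(* An adaptive strategy played against a fixed set B of valid messages,
   unrolled from its first query: after the first answer a the opponent
   continues with the strategy residual st a. *)
Definition residual (v : nat) (st : strategy v) (a : bool) : strategy v :=
  fun h => st (a :: h).

Fixpoint answers (v : nat) (st : strategy v) (B : {set 'I_v}) (j : nat) : seq bool :=
  if j is j'.+1 then (st [::] \in B) :: answers (residual st (st [::] \in B)) B j'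
  else [::].

Fixpoint asked (v : nat) (st : strategy v) (B : {set 'I_v}) (j : nat) : seq 'I_v :=
  if j is j'.+1 then st [::] :: asked (residual st (st [::] \in B)) B j' else [::].

Definition guess (v : nat) (st : strategy v) (B : {set 'I_v}) (j : nat) : 'I_v :=
  st (answers st B j).

Lemma answers_rcons v (st : strategy v) B j :
  answers st B j.+1 = rcons (answers st B j) (guess st B j \in B).
Proof.
elim: j st => [|j IH] st //.
transitivity ((st [::] \in B) :: answers (residual st (st [::] \in B)) B j.+1) => //.
by rewrite IH.
Qed.

Lemma hist_answers k v b (enc : 'I_b -> 'I_k -> 'I_v) st e j :
  hist enc st e j = answers st (valid_msgs enc e) j.
Proof. by elim: j => [|j IH] //; rewrite answers_rcons /guess -IH. Qed.

Lemma output_guess k v b (enc : 'I_b -> 'I_k -> 'I_v) st i e :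
  output enc st i e = guess st (valid_msgs enc e) i.
Proof. by rewrite /output hist_answers. Qed.

Lemma queries_asked k v b (enc : 'I_b -> 'I_k -> 'I_v) st i e :
  queries enc st i e = asked st (valid_msgs enc e) i.
Proof.
have unrolled B : [seq guess st B j | j <- iota 0 i] = asked st B i.
  elim: i st => [|i IH] st //=; congr (_ :: _).
  by rewrite -IH -(addn0 1) iotaDl -map_comp.
by rewrite -unrolled; apply: eq_map => j; rewrite /guess hist_answers.
Qed.

Lemma guess_residual v (st : strategy v) B j :
  guess st B j.+1 = guess (residual st (st [::] \in B)) B j.
Proof. by []. Qed.

Lemma asked_residual v (st : strategy v) B j :
  asked st B j.+1 = st [::] :: asked (residual st (st [::] \in B)) B j.
Proof. by []. Qed.

Definition fresh (v : nat) (st : strategy v) (j : nat) (X B : {set 'I_v}) : bool :=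
  (guess st B j \notin X) && (guess st B j \notin asked st B j).

Lemma fresh_residual v (st : strategy v) j X B :
  fresh st j.+1 X B -> fresh (residual st (st [::] \in B)) j (st [::] |: X) B.
Proof.
rewrite /fresh guess_residual asked_residual in_cons in_setU1 !negb_or.
by case/andP => -> /andP [-> ->].
Qed.

(* Rate bookkeeping for the two branches of a first query: if the branches
   succeed with rates c1 / n1 and c / n1, where n = n1 + 1 and c = c1 + 1,
   and the first branch carries a fraction c / n of the weight, then the
   overall success rate is c / n. *)
Lemma weighted_rate n n1 c c1 u1 u2 s1 s2 : n = n1.+1 -> c = c1.+1 -> 0 < n1 ->
  n1 * u1 = c1 * s1 -> n1 * u2 = c * s2 -> n * s1 = c * (s1 + s2) ->
  n * (u1 + u2) = c * (s1 + s2).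
Proof.
move=> -> -> n1_gt0 rate1 rate2 weight.
apply/eqP; rewrite -(@eqn_pmul2l n1) //; apply/eqP.
have -> : n1 * (n1.+1 * (u1 + u2)) = n1.+1 * (n1 * u1) + n1.+1 * (n1 * u2) by ring.
rewrite rate1 rate2.
have -> : n1.+1 * (c1 * s1) = c1 * (n1.+1 * s1) by ring.
have n1s1 : n1 * s1 = c1 * (s1 + s2) + s2 by move: weight; rewrite mulSn; lia.
rewrite weight.
have -> : n1 * (c1.+1 * (s1 + s2)) = c1.+1 * (n1 * s1) + n1 * c1.+1 * s2 by ring.
rewrite n1s1; ring.
Qed.

Section OfflineSpoofing.
Variables (v t k lam : nat) (D : {set {set 'I_v}}).
Hypotheses (design : is_design t k lam D) (tk : t <= k) (kv : k <= v).
Local Notation blocks_through := (blocks_through D).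

Definition hits (st : strategy v) (i : nat) (S : {set {set 'I_v}}) : {set {set 'I_v}} :=
  [set B in S | guess st B i \in B].

Lemma mem_hits st i S B : (B \in hits st i S) = (B \in S) && (guess st B i \in B).
Proof. by rewrite inE. Qed.

Lemma card_hits_split st i A R :
  #|hits st i.+1 (blocks_through A R)| =
  #|hits (residual st true) i (blocks_through (st [::] |: A) R)| +
  #|hits (residual st false) i (blocks_through A (st [::] |: R))|.
Proof.
rewrite -(cardsID [set B : {set 'I_v} | st [::] \in B]).
congr (_ + _); apply: eq_card => B.
  rewrite in_setI !mem_hits blocks_throughU1l inE /guess /=.
  by case: (st [::] \in B); rewrite ?andbF ?andbT.
rewrite in_setD !mem_hits blocks_throughU1r inE /guess /=.
by case: (st [::] \in B); rewrite ?andbF ?andbT.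
Qed.

(* The heart of the spoofing bound: against the blocks through A avoiding R
   (the knowledge gained so far, |A| + |R| + i < t), any strategy making i
   more queries and then outputting a new message is accepted by a fraction
   (k - |A|) / (v - |A| - |R|) of them. *)
Definition uniform_rate (i : nat) : Prop :=
  forall st (A R : {set 'I_v}), A \subset ~: R -> #|A| + #|R| + i < t ->
  {in blocks_through A R, forall B, fresh st i (A :|: R) B} ->
  (v - (#|A| + #|R|)) * #|hits st i (blocks_through A R)| =
  (k - #|A|) * #|blocks_through A R|.

(* Without queries, the output is a fixed new point. *)
Lemma uniform_rate0 : uniform_rate 0.
Proof.
move=> st A R AR ARt fresh_out.
have [no_block | [B0 B0S]] := set_0Vmem (blocks_through A R).
  rewrite no_block cards0 muln0; apply/eqP; rewrite muln_eq0 cards_eq0.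
  by apply/orP; right; apply/eqP/setP => B; rewrite mem_hits inE.
have x_new : st [::] \notin A :|: R by case/andP: (fresh_out B0 B0S).
have -> : hits st 0 (blocks_through A R) = blocks_through (st [::] |: A) R.
  by apply/setP => B; rewrite mem_hits blocks_throughU1l.
by apply: (card_blocks_through_ratio design) => //; lia.
Qed.

(* A first query in A or R has a known answer; it is wasted. *)
Lemma uniform_rate_known i : uniform_rate i -> forall st (A R : {set 'I_v}),
  st [::] \in A :|: R -> A \subset ~: R -> #|A| + #|R| + i.+1 < t ->
  {in blocks_through A R, forall B, fresh st i.+1 (A :|: R) B} ->
  (v - (#|A| + #|R|)) * #|hits st i.+1 (blocks_through A R)| =
  (k - #|A|) * #|blocks_through A R|.
Proof.
move=> IH st A R; set x := st [::] => x_old AR ARt fresh_out.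
have forced B : B \in blocks_through A R -> (x \in B) = (x \in A).
  rewrite inE => /and3P [_ AB RB]; move: x_old; rewrite in_setU => /orP [xA | xR].
    by rewrite xA (subsetP AB).
  have xA : x \notin A by apply/negP => /(subsetP AR); rewrite inE xR.
  by rewrite (negPf xA); apply/negbTE; move/subsetP: RB => /(_ x xR); rewrite inE.
have -> : hits st i.+1 (blocks_through A R) =
          hits (residual st (x \in A)) i (blocks_through A R).
  apply/setP => B; rewrite !mem_hits guess_residual.
  by case BS: (B \in _) => //=; rewrite -/x forced.
apply: IH => //; first by lia.
have absorb : x |: (A :|: R) = A :|: R by apply/setUidPr; rewrite sub1set.
move=> B BS; rewrite -(forced B BS) -absorb.
by apply: fresh_residual; apply: fresh_out.
Qed.

(* A new first query x splits the blocks into those through x |: A avoiding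
   R and those through A avoiding x |: R, both handled by induction; the
   design ratio weighs the two branches. *)
Lemma uniform_rate_new i : uniform_rate i -> forall st (A R : {set 'I_v}),
  st [::] \notin A :|: R -> A \subset ~: R -> #|A| + #|R| + i.+1 < t ->
  {in blocks_through A R, forall B, fresh st i.+1 (A :|: R) B} ->
  (v - (#|A| + #|R|)) * #|hits st i.+1 (blocks_through A R)| =
  (k - #|A|) * #|blocks_through A R|.
Proof.
move=> IH st A R; set x := st [::] => x_new AR ARt fresh_out.
move: (x_new); rewrite in_setU negb_or => /andP [xA xR].
have AR1 : x |: A \subset ~: R by rewrite subUset sub1set inE xR AR.
have AR2 : A \subset ~: (x |: R).
  apply/subsetP => z zA; rewrite !inE negb_or; apply/andP; split.
    by apply/eqP => zx; rewrite -zx zA in xA.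
  by move/subsetP: AR => /(_ z zA); rewrite inE.
have cardA1 : #|x |: A| = #|A|.+1 by rewrite cardsU1 xA.
have cardR1 : #|x |: R| = #|R|.+1 by rewrite cardsU1 xR.
have fresh_next B : B \in blocks_through A R ->
    fresh (residual st (x \in B)) i (x |: (A :|: R)) B.
  by move=> BS; apply: fresh_residual; apply: fresh_out.
have ARt1 : #|x |: A| + #|R| + i < t by lia.
have ARt2 : #|A| + #|x |: R| + i < t by lia.
have accept := IH (residual st true) _ _ AR1 ARt1.
have reject := IH (residual st false) _ _ AR2 ARt2.
rewrite cardA1 addSn in accept; rewrite cardR1 addnS in reject.
rewrite card_hits_split -/x (card_blocks_through_split D x A R).
apply: (weighted_rate _ _ _ (accept _) (reject _)); try lia.
- move=> B; rewrite blocks_throughU1l => /andP [BS xB].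
  by rewrite -setUA; have := fresh_next B BS; rewrite xB.
- move=> B; rewrite blocks_throughU1r => /andP [BS /negPf xB].
  by rewrite setUCA; have := fresh_next B BS; rewrite xB.
- rewrite -(card_blocks_through_split D x A R).
  by apply: (card_blocks_through_ratio design) => //; lia.
Qed.

Lemma card_hits i : uniform_rate i.
Proof.
elim: i => [|i IH]; first exact: uniform_rate0.
move=> st A R; have [x_old | x_new] := boolP (st [::] \in A :|: R).
  exact: uniform_rate_known.
exact: uniform_rate_new.
Qed.

End OfflineSpoofing.

(* An offline attack of order i with i < v exists: query 0, ..., i - 1 and
   output i, whatever the answers. *)
Lemma offline_strategy_exists k v b (enc : 'I_b -> 'I_k -> 'I_v) i :
  i < v -> exists st, valid_offline enc st i.
Proof.
move=> iv; pose m0 := Ordinal iv.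
pose st : strategy v := fun h => insubd m0 (size h).
have size_hist e j : size (hist enc st e j) = j.
  by elim: j => //= j IH; rewrite size_rcons IH.
exists st => e; rewrite /output /queries {1}/st size_hist.
apply/mapP => [[j]]; rewrite mem_iota add0n => /andP [_ ji].
rewrite /st size_hist => /(congr1 val); rewrite !val_insubd iv.
by rewrite (ltn_trans ji iv) => ij; rewrite ij ltnn in ji.
Qed.

Local Open Scope ring_scope.

Lemma sum_pred_const (I : finType) (P : pred I) (x : rat) :
  \sum_(i | P i) x = (\sum_i (P i : nat))%:R * x.
Proof.
rewrite natr_sum mulr_suml big_mkcond /=; apply: eq_bigr => i _.
by case: (P i); rewrite ?mul1r ?mul0r.
Qed.

(* Optimality only depends on the block count b C(k,t) = lam C(v,t). *)
Lemma optimal_iff_lambda1 (t k v lam b : nat) (enc : 'I_b -> 'I_k -> 'I_v) :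
  (t <= k)%N -> (t <= v)%N -> (b * 'C(k, t) = lam * 'C(v, t))%N ->
  optimal enc t <-> lam = 1%N.
Proof.
move=> tk tv count; rewrite /optimal.
have Ck0 : 'C(k, t)%:R != 0 :> rat by rewrite pnatr_eq0 -lt0n bin_gt0.
have Cv0 : (0 < 'C(v, t))%N by rewrite bin_gt0.
split=> [opt | lam1].
  have : (b * 'C(k, t) == 'C(v, t))%N by rewrite -(eqr_nat rat) natrM opt divfK.
  by rewrite count => /eqP; nia.
by apply: (mulIf Ck0); rewrite divfK // -natrM count lam1 mul1n.
Qed.

Section CodeFromDesign.
Variables (t k v lam : nat) (D : {set {set 'I_v}}).
Hypotheses (t_gt0 : (0 < t)%N) (tk : (t <= k)%N) (kv : (k <= v)%N)
  (design : is_design t k lam D) (v_dvd_b : (v %| #|D|)%N).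

Lemma k_gt0 : (0 < k)%N. Proof. exact: leq_trans t_gt0 tk. Qed.

Lemma v_gt0 : (0 < v)%N. Proof. exact: leq_trans k_gt0 kv. Qed.

Lemma blocks_gt0 : (0 < lam)%N -> (0 < #|D|)%N.
Proof.
move=> lam_gt0; have : (0 < lam * 'C(v, t))%N.
  by rewrite muln_gt0 lam_gt0 bin_gt0 (leq_trans tk kv).
by rewrite -(card_design design) muln_gt0 => /andP [].
Qed.

Definition block (e : 'I_#|D|) : {set 'I_v} := enum_val e.

Lemma block_card e : #|block e| = k.
Proof. by apply: (block_size design); apply: enum_valP. Qed.

Lemma sum_blocks (F : {set 'I_v} -> nat) :
  (\sum_e F (block e) = \sum_(B in D) F B)%N.
Proof. by rewrite [RHS]big_enum_val. Qed.

Lemma block_replication m : (\sum_e (m \in block e : nat) = #|D| %/ v * k)%N.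
Proof.
rewrite (sum_blocks (fun B => (m \in B : nat))).
have -> : (\sum_(B in D) (m \in B : nat) = #|blocks_through D [set m] set0|)%N.
  rewrite /blocks_through card_set_sum big_mkcond /=; apply: eq_bigr => B _.
  by rewrite sub1set sub0set andbT; case: (B \in D).
apply/eqP; rewrite -(eqn_pmul2l v_gt0) (design_replication design) //.
by rewrite -{1}(divnK v_dvd_b); apply/eqP; ring.
Qed.

Variable enc : 'I_#|D| -> 'I_k -> 'I_v.
Hypotheses (enc_ord : ordering block enc)
  (enc_bal : forall s m, occurrences enc s m = (#|D| %/ v)%N).

Lemma valid_msgs_block e : valid_msgs enc e = block e.
Proof. by rewrite /valid_msgs (ordering_image block_card e enc_ord). Qed.

Lemma enc_auth_system : auth_system enc.
Proof.
split=> [e | e1 e2 same]; first by case: (enc_ord e).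
apply: enum_val_inj; rewrite -[enum_val e1]/(block e1) -[enum_val e2]/(block e2).
by rewrite -!valid_msgs_block /valid_msgs (eq_imset _ same).
Qed.

(* Every pair (s, m) has the same probability c / (b k), so the message
   reveals nothing about the source state. *)
Lemma enc_perfect_secrecy : perfect_secrecy enc (@unif #|D|) (@unif k).
Proof.
move=> s m; set x : rat := (#|D| %/ v)%:R * (#|D|%:R^-1 * k%:R^-1).
have pSM_const s' : pSM enc (@unif #|D|) (@unif k) s' m = x.
  by rewrite /pSM /unif sum_pred_const -/(occurrences _ _ _) enc_bal.
rewrite /pM (eq_bigr _ (fun s' _ => pSM_const s')) sumr_const card_ord pSM_const.
move=> pos; have x0 : x != 0 by apply: contraTneq pos => ->; rewrite mul0rn ltxx.
have k0 : k%:R != 0 :> rat by rewrite pnatr_eq0 -lt0n k_gt0.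
by rewrite /unif -mulr_natr; field; rewrite x0 k0.
Qed.

(* Every offline attack of order t - 1 succeeds with probability exactly
   k / v: the case A = R = set0 of the uniform rate. *)
Lemma enc_offline_success : (0 < lam)%N -> forall st, valid_offline enc st t.-1 ->
  succ_offline enc (@unif #|D|) st t.-1 = k%:R / v%:R.
Proof.
move=> lam_gt0 st st_ok; rewrite /succ_offline /unif sum_pred_const.
have accepting : (\sum_e (output enc st t.-1 e \in valid_msgs enc e : nat) =
    #|hits st t.-1 D|)%N.
  under eq_bigr do rewrite output_guess valid_msgs_block.
  rewrite (sum_blocks (fun B => (guess st B t.-1 \in B : nat))).
  rewrite card_set_sum big_mkcond /=; apply: eq_bigr => B _.
  by case: (B \in D).
have rate : (v * #|hits st t.-1 D| = k * #|D|)%N.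
  have := @card_hits v t k lam D design tk kv t.-1 st set0 set0 (sub0set _).
  rewrite !cards0 blocks_through0 setU0 !subn0; apply; first by rewrite prednK.
  move=> B BD; have := st_ok (enum_rank_in BD B).
  rewrite output_guess queries_asked valid_msgs_block /block enum_rankK_in //.
  by rewrite /fresh inE.
have b0 : #|D|%:R != 0 :> rat by rewrite pnatr_eq0 -lt0n blocks_gt0.
have v0 : v%:R != 0 :> rat by rewrite pnatr_eq0 -lt0n v_gt0.
rewrite accepting; apply: (mulfI v0); rewrite mulrA -natrM rate natrM.
by field; rewrite b0 v0.
Qed.

End CodeFromDesign.

Theorem mainTheorem5 (t k v lam : nat) (D : {set {set 'I_v}}) :
  (1 <= t)%N -> (t <= k)%N -> (k <= v)%N -> (1 <= lam)%N ->
  is_design t k lam D -> (v %| #|D|)%N ->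
  exists enc : 'I_#|D| -> 'I_k -> 'I_v,
    [/\ auth_system enc,
        perfect_secrecy enc (@unif #|D|) (@unif k),
        fold_secure enc (@unif #|D|) t.-1
      & (optimal enc t <-> lam = 1%N)].
Proof.
move=> t_gt0 tk kv lam_gt0 design v_dvd_b.
have [enc [enc_ord enc_bal]] := balanced_ordering (block_card design)
  (block_replication t_gt0 tk kv design v_dvd_b).
have success := enc_offline_success t_gt0 tk kv design enc_ord lam_gt0.
exists enc; split.
- exact (enc_auth_system design enc_ord).
- exact (enc_perfect_secrecy t_gt0 tk enc_bal).
- split; last by move=> st st_ok; rewrite success.
  have t1_lt_v : (t.-1 < v)%N by rewrite prednK // (leq_trans tk kv).
  have [st st_ok] := offline_strategy_exists enc t1_lt_v.
  by exists st => //; apply: success.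
- exact (optimal_iff_lambda1 enc tk (leq_trans tk kv) (card_design design)).
Qed.
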